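(* Let $n\ge 1$ and let $0 \leq m \leq n-1$ be an integer. Then there exist a real normed space $X$ with $\dim X=n$ and a linear subspace $Y\subseteq X$ with $\dim Y=n-1$ such that $\dim \mathcal{P}_{\min}(X, Y)=m$. Moreover, if $0 \leq m \leq n-3$, then $X$ and $Y$ can be chosen so that in addition $\lambda(Y, X) > 1$.
   Context: A projection onto $Y$ is a linear $P:X\to Y$ with $P|_Y=\mathrm{id}_Y$; $\lambda(Y,X)$ is the infimum of the operator norms of such projections and $\mathcal{P}_{\min}(X,Y)$ is the set of projections of norm $\lambda(Y,X)$. $\dim \mathcal{P}_{\min}(X,Y)$ is the affine dimension of this convex subset of the space $\mathcal{L}(X,X)$ of linear operators on $X$ (the smallest dimension of an affine subspace containing it). *)

From HB Require Import structures.
From mathcomp Require Import all_boot all_order all_algebra.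
From mathcomp Require Import boolp classical_sets reals.
Set Implicit Arguments. Unset Strict Implicit. Unset Printing Implicit Defensive.
Import Order.TTheory GRing.Theory Num.Theory.
Local Open Scope ring_scope.
Local Open Scope classical_set_scope.

(* An n-dimensional real normed space is modelled as 'rV[R]_n with a norm N.
   Linear operators on X are n x n matrices acting on the right: v |-> v *m A. *)
Definition is_norm (R : realType) (n : nat) (N : 'rV[R]_n -> R) : Prop :=
  [/\ forall x, 0 <= N x,
      forall x, N x = 0 -> x = 0,
      forall (a : R) x, N (a *: x) = `|a| * N x &
      forall x y, N (x + y) <= N x + N y].

Definition opnorm (R : realType) (n : nat) (N : 'rV[R]_n -> R) (A : 'M[R]_n) : R :=
  sup [set N (v *m A) | v in [set v | N v <= 1]].

Definition is_projection (R : realType) (n : nat) (Y : 'M[R]_n) (P : 'M[R]_n) : Prop :=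
  (forall v : 'rV[R]_n, (v *m P <= Y)%MS) /\
  (forall y : 'rV[R]_n, (y <= Y)%MS -> y *m P = y).

Definition proj_const (R : realType) (n : nat) (N : 'rV[R]_n -> R) (Y : 'M[R]_n) : R :=
  inf [set opnorm N P | P in [set P | is_projection Y P]].

Definition Pmin (R : realType) (n : nat) (N : 'rV[R]_n -> R) (Y : 'M[R]_n)
  : set 'M[R]_n :=
  [set P | is_projection Y P /\ opnorm N P = proj_const N Y].

Definition in_affine_of_dim (R : realType) (n : nat) (S : set 'M[R]_n) (d : nat) : Prop :=
  exists (P0 : 'M[R]_n) (V : 'M[R]_(n * n)),
    \rank V = d /\ forall P, S P -> (mxvec (P - P0) <= V)%MS.

(* The affine dimension of S equals d (d >= 0, so S is nonempty; the empty set
   has affine dimension -1 by convention). *)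
Definition affine_dim_eq (R : realType) (n : nat) (S : set 'M[R]_n) (d : nat) : Prop :=
  S !=set0 /\ in_affine_of_dim S d /\
  forall d', in_affine_of_dim S d' -> (d <= d')%N.

From mathcomp Require Import all_boot all_order all_algebra.
From mathcomp Require Import classical_sets reals.
From mathcomp Require Import ring lra zify.
Import Order.TTheory GRing.Theory Num.Theory.
Local Open Scope ring_scope.
Local Open Scope classical_set_scope.
Set Implicit Arguments. Unset Strict Implicit. Unset Printing Implicit Defensive.

(* Every projection of R^n onto the hyperplane Y = ker f has the form P_z = 1 - f z with
   z f = 1, and P_z - P_z' = f (z' - z) with d |-> f d injective.  Hence the affine dimension of
   P_min(X, Y) is the dimension of the set of minimising z, and it equals m as soon as the
   minimisers all agree with one of them, z0, on the coordinates >= m while z0 + eps e_j is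
   still minimising for each j < m.
   Both examples use the norm max(sum_(i in A) |v_i|, max_(i notin A) |v_i|).
   For m + 3 <= n take A empty (the sup norm) and f the indicator of the k = n - m >= 3 last
   coordinates: testing P_z on the sign vectors e_j - sum_(i <> j) f_i e_i and averaging gives
   ||P_z|| >= 2 - 2/k > 1, with equality forcing z_j = 1/k on those coordinates, while the
   first m coordinates of z can move by (k - 2)/k^2.
   For m < n take A = {0..m} and f = e_m: P_z fixes every e_j with j <> m, so ||P_z|| >= 1;
   the vectors e_j +- e_m force z_j = 0 for j > m when ||P_z|| = 1, and z = e_m + e_j, j < m,
   gives norm one because the l1 part absorbs the perturbation. *)

Section HyperplaneProjection.
Variables (R : realType) (n : nat) (f : 'cV[R]_n).

Definition hyperplane_proj (z : 'rV[R]_n) : 'M[R]_n := 1%:M - f *m z.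

Lemma hyperplane_projE z (v : 'rV[R]_n) : v *m hyperplane_proj z = v - v *m f *m z.
Proof. by rewrite mulmxBr mulmx1 mulmxA. Qed.

Lemma hyperplane_proj_coord z (v : 'rV[R]_n) j :
  (v *m hyperplane_proj z) 0 j = v 0 j - (\sum_i v 0 i * f i 0) * z 0 j.
Proof. by rewrite hyperplane_projE !mxE big_ord1 mxE. Qed.

Lemma rV_cV_mul1 (z : 'rV[R]_n) : z *m f = 1%:M <-> \sum_i z 0 i * f i 0 = 1.
Proof.
split=> [/matrixP/(_ 0 0)|zf]; first by rewrite !mxE.
by apply/matrixP => a b; rewrite !ord1 !mxE zf.
Qed.

Lemma hyperplane_projB z z' :
  hyperplane_proj z - hyperplane_proj z' = f *m (z' - z).
Proof. by rewrite mulmxBr opprB addrC addrA subrK. Qed.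

Lemma is_projection_hyperplane_proj z :
  z *m f = 1%:M -> is_projection (kermx f) (hyperplane_proj z).
Proof.
move=> zf; split=> [v|y].
  by rewrite sub_kermx hyperplane_projE mulmxBl -[_ *m z *m f]mulmxA zf mulmx1 subrr.
by rewrite sub_kermx hyperplane_projE => /eqP->; rewrite mul0mx subr0.
Qed.

Variable z0 : 'rV[R]_n.
Hypothesis z0f : z0 *m f = 1%:M.

Lemma is_projection_kermx_hyperplane_proj P : is_projection (kermx f) P ->
  exists2 z, z *m f = 1%:M & P = hyperplane_proj z.
Proof.
case=> PY fixY; exists (z0 - z0 *m P).
  have /eqP z0Pf : z0 *m P *m f == 0 by rewrite -sub_kermx.
  by rewrite mulmxBl z0f z0Pf subr0.
have fix_ker : (1%:M - f *m z0) *m P = 1%:M - f *m z0.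
  apply/row_matrixP => i; rewrite row_mul; apply: fixY.
  by rewrite sub_kermx -row_mul mulmxBl mul1mx -mulmxA z0f mulmx1 subrr row0.
rewrite -[P in LHS]mul1mx -(subrK (f *m z0) 1%:M) mulmxDl fix_ker.
by rewrite /hyperplane_proj mulmxBr mulmxA opprB addrA addrAC.
Qed.

Lemma rank_kermx_col : \rank (kermx f) = n.-1.
Proof.
rewrite mxrank_ker -subn1; congr (_ - _)%N; apply/eqP.
rewrite eqn_leq rank_leq_col lt0n mxrank_eq0 /=; apply/eqP => f0.
by move/matrixP: z0f => /(_ 0 0)/eqP; rewrite f0 mulmx0 !mxE eq_sym oner_eq0.
Qed.

Definition lin_mulcol : 'M[R]_(n, n * n) := lin1_mx (mxvec \o mulmx f).

Lemma lin_mulcolE d : d *m lin_mulcol = mxvec (f *m d).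
Proof. exact: mul_rV_lin1. Qed.

Lemma row_free_lin_mulcol : row_free lin_mulcol.
Proof.
apply: inj_row_free => v; rewrite lin_mulcolE => /(canRL mxvecK); rewrite linear0.
by move=> fv0; rewrite -[v]mul1mx -z0f -mulmxA fv0 mulmx0.
Qed.

End HyperplaneProjection.

Section OperatorNorm.
Variables (R : realType) (n : nat) (N : 'rV[R]_n -> R).
Hypothesis normN : is_norm N.

Lemma normv0 : N 0 = 0.
Proof. by case: normN => _ _ + _ => /(_ 0 0); rewrite scale0r normr0 mul0r. Qed.

Lemma normv_sum (I : Type) (r : seq I) (F : I -> 'rV[R]_n) :
  N (\sum_(i <- r) F i) <= \sum_(i <- r) N (F i).
Proof.
case: normN => _ _ _ normD; elim/big_rec2: _ => [|i y v _ Nv]; first by rewrite normv0.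
by apply: le_trans (normD _ _) _; rewrite lerD2l.
Qed.

Lemma opnorm_le A c : (forall v, N v <= 1 -> N (v *m A) <= c) -> opnorm N A <= c.
Proof.
move=> NA; apply: ge_sup; last by move=> _ [v /NA ? <-].
by exists (N (0 *m A)), 0 => //=; rewrite normv0 ler01.
Qed.

(* Without a bound on the unit ball the sup defining opnorm would be a junk value. *)
Hypothesis coord_le_norm : forall (w : 'rV[R]_n) i, `|w 0 i| <= N w.

Lemma le_opnorm A (v : 'rV[R]_n) : N v <= 1 -> N (v *m A) <= opnorm N A.
Proof.
move=> Nv; apply: ub_le_sup; last by exists v.
case: normN => N_ge0 _ NZ _.
exists (\sum_j (\sum_i `|A i j|) * N (delta_mx 0 j)); move=> _ [w /= Nw <-].
rewrite {1}(row_sum_delta (w *m A)); apply: le_trans (normv_sum _ _) _.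
apply: ler_sum => j _; rewrite NZ ler_wpM2r // mxE.
apply: le_trans (ler_norm_sum _ _ _) _; apply: ler_sum => i _.
by rewrite normrM ler_piMl // (le_trans (coord_le_norm w i)).
Qed.

Lemma opnorm_fixed_ge1 A (v : 'rV[R]_n) : v != 0 -> v *m A = v -> 1 <= opnorm N A.
Proof.
case: normN => N_ge0 N_eq0 NZ _ v0 vA.
have Nv_gt0 : 0 < N v by rewrite lt_def N_ge0 andbT; apply: contraNneq v0 => /N_eq0->.
have Nu : N ((N v)^-1 *: v) = 1 by rewrite NZ ger0_norm ?invr_ge0 // mulVf ?gt_eqF.
by rewrite -Nu -{2}vA scalemxAl le_opnorm // Nu.
Qed.

Lemma proj_const_eq_min Y P0 : is_projection Y P0 ->
  (forall P, is_projection Y P -> opnorm N P0 <= opnorm N P) ->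
  proj_const N Y = opnorm N P0.
Proof.
move=> P0Y P0min; have lb : lbound [set opnorm N P | P in is_projection Y] (opnorm N P0).
  by move=> _ [P PY <-]; apply: P0min.
apply/le_anti/andP; split; first by apply: ge_inf; [exists (opnorm N P0) | exists P0].
by apply: lb_le_inf lb; exists (opnorm N P0), P0.
Qed.

End OperatorNorm.

Lemma row_pid_mx (R : ringType) (n m : nat) (i : 'I_n) :
  row i (pid_mx m : 'M[R]_n) = if (i < m)%N then 'e_i else 0.
Proof.
by apply/rowP => j; case: ifP => im; rewrite !mxE ?eqxx ?im ?andbT ?andbF // eq_sym.
Qed.

Lemma mul_rV_pid_mx (R : ringType) (n m : nat) (d : 'rV[R]_n) :
  (forall j : 'I_n, (m <= j)%N -> d 0 j = 0) -> d *m pid_mx m = d.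
Proof.
move=> d_tail; apply/rowP => j; rewrite mxE (bigD1 j) //= big1 => [|k kj].
  by rewrite mxE eqxx /=; case: leqP => [/d_tail->|]; rewrite ?mul0r ?mulr1 addr0.
by rewrite mxE val_eqE (negbTE kj) mulr0.
Qed.

Section MinimalProjectionDimension.
Variables (R : realType) (n : nat) (N : 'rV[R]_n -> R) (f : 'cV[R]_n).
Variables (z0 : 'rV[R]_n) (m : nat) (eps : R).
Local Notation P := (hyperplane_proj f).
Hypotheses (z0f : z0 *m f = 1%:M) (m_le_n : (m <= n)%N) (eps_gt0 : 0 < eps).
Hypothesis f_head0 : forall j : 'I_n, (j < m)%N -> f j 0 = 0.
Hypothesis z0_min : forall z, z *m f = 1%:M -> opnorm N (P z0) <= opnorm N (P z).
Hypothesis min_tail : forall z, z *m f = 1%:M -> opnorm N (P z) <= opnorm N (P z0) ->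
  forall j : 'I_n, (m <= j)%N -> z 0 j = z0 0 j.
Hypothesis min_head : forall j : 'I_n, (j < m)%N ->
  opnorm N (P (z0 + eps *: 'e_j)) <= opnorm N (P z0).

Lemma proj_const_kermx : proj_const N (kermx f) = opnorm N (P z0).
Proof.
apply: proj_const_eq_min; first exact: is_projection_hyperplane_proj.
by move=> _ /(is_projection_kermx_hyperplane_proj z0f) [z zf ->]; apply: z0_min.
Qed.

Lemma Pmin_hyperplane_proj z : z *m f = 1%:M -> opnorm N (P z) <= opnorm N (P z0) ->
  Pmin N (kermx f) (P z).
Proof.
move=> zf Pz_le; split; first exact: is_projection_hyperplane_proj.
by rewrite proj_const_kermx; apply/le_anti; rewrite Pz_le z0_min.
Qed.

Let head_span : 'M[R]_(n, n * n) := pid_mx m *m lin_mulcol f.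

Lemma rank_head_span : \rank head_span = m.
Proof. by rewrite mxrankMfree ?rank_pid_mx // (row_free_lin_mulcol z0f). Qed.

Lemma Pmin_sub_head_span Q : Pmin N (kermx f) Q -> (mxvec (Q - P z0) <= head_span)%MS.
Proof.
case=> /(is_projection_kermx_hyperplane_proj z0f) [z zf ->]; rewrite proj_const_kermx => Pz_eq.
have /(min_tail zf) tail_eq : opnorm N (P z) <= opnorm N (P z0) by rewrite Pz_eq.
rewrite hyperplane_projB -lin_mulcolE -(mul_rV_pid_mx (m := m) (d := z0 - z)).
  exact/submxMr/submxMl.
by move=> j mj; rewrite !mxE tail_eq ?subrr.
Qed.

Lemma head_span_sub (V : 'M[R]_(n * n)) Q0 :
  (forall Q, Pmin N (kermx f) Q -> (mxvec (Q - Q0) <= V)%MS) -> (head_span <= V)%MS.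
Proof.
move=> QV; apply/row_subP => j; rewrite row_mul row_pid_mx.
case: ltnP => [jm|_]; last by rewrite mul0mx sub0mx.
have ejf : ('e_j : 'rV[R]_n) *m f = 0.
  by rewrite -rowE; apply/rowP => k; rewrite ord1 !mxE f_head0.
have zjf : (z0 + eps *: 'e_j) *m f = 1%:M.
  by rewrite mulmxDl -scalemxAl ejf scaler0 addr0.
have /QV Q1V := Pmin_hyperplane_proj zjf (min_head jm).
have /QV Q0V := Pmin_hyperplane_proj z0f (lexx _).
have : (mxvec (P (z0 + eps *: 'e_j) - P z0) <= V)%MS.
  have diff (A B : 'M[R]_n) : A - B = (A - Q0) - (B - Q0) by rewrite opprB addrA subrK.
  by rewrite diff linearB addmx_sub // -scaleN1r scalemx_sub.
rewrite hyperplane_projB opprD addNKr mulmxN -scalemxAr linearN linearZ /= -lin_mulcolE.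
move/(scalemx_sub (- eps^-1)).
by rewrite scalerN -scaleNr scalerA opprK mulVf ?gt_eqF ?scale1r.
Qed.

Theorem affine_dim_Pmin : affine_dim_eq (Pmin N (kermx f)) m.
Proof.
split; first by exists (P z0); apply: Pmin_hyperplane_proj.
split.
  exists (P z0), <<head_span>>%MS; rewrite genmxE rank_head_span; split=> // Q.
  by rewrite genmxE; apply: Pmin_sub_head_span.
by move=> _ [Q0 [V [<- /head_span_sub/mxrankS]]]; rewrite rank_head_span.
Qed.

End MinimalProjectionDimension.

Section L1SupNorm.
Variables (R : realType) (n : nat) (A : {pred 'I_n}).

Definition l1_sup_norm (v : 'rV[R]_n) : R :=
  Num.max (\sum_(i in A) `|v 0 i|) (\big[Num.max/0]_(i | i \notin A) `|v 0 i|).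

Lemma l1_sup_norm_coord (v : 'rV[R]_n) i : `|v 0 i| <= l1_sup_norm v.
Proof.
rewrite le_max; case: (boolP (i \in A)) => iA; last by rewrite le_bigmax_cond ?orbT.
by rewrite (bigD1 i) //= lerDl sumr_ge0.
Qed.

Lemma l1_sup_norm_le (v : 'rV[R]_n) c : \sum_(i in A) `|v 0 i| <= c ->
  (forall i, i \notin A -> `|v 0 i| <= c) -> l1_sup_norm v <= c.
Proof.
move=> sum_le max_le; rewrite ge_max sum_le bigmax_le //.
exact: le_trans (sumr_ge0 _ _) sum_le.
Qed.

Lemma l1_sup_normZ a (v : 'rV[R]_n) : l1_sup_norm (a *: v) = `|a| * l1_sup_norm v.
Proof.
rewrite /l1_sup_norm maxr_pMr // mulr_sumr.
rewrite (big_endo (fun x => `|a| * x)) ?mulr0 //; last by move=> x y; rewrite maxr_pMr.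
by congr Num.max; apply: eq_bigr => i _; rewrite mxE normrM.
Qed.

Lemma is_norm_l1_sup_norm : is_norm l1_sup_norm.
Proof.
split=> [v|v N0|a v|v w].
- by rewrite le_max sumr_ge0.
- apply/rowP => i; rewrite mxE; apply/normr0_eq0/le_anti.
  by rewrite normr_ge0 -N0 l1_sup_norm_coord.
- exact: l1_sup_normZ.
have sum_le (u : 'rV[R]_n) : \sum_(i in A) `|u 0 i| <= l1_sup_norm u by rewrite le_max lexx.
apply: l1_sup_norm_le => [|i _].
  rewrite (le_trans _ (lerD (sum_le v) (sum_le w))) // -big_split ler_sum // => i _.
  by rewrite mxE ler_normD.
by rewrite mxE (le_trans (ler_normD _ _)) // lerD ?l1_sup_norm_coord.
Qed.

End L1SupNorm.

Section SupNormExample.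
Variables (R : realType) (n m : nat).
Hypothesis m3_le_n : (m + 3 <= n)%N.

Local Notation N := (@l1_sup_norm R n pred0).
Let k : R := (n - m)%:R.
Let f : 'cV[R]_n := \col_i (if (m <= i)%N then 1 else 0).
Let z0 : 'rV[R]_n := \row_i (f i 0 / k).
Let c : R := 2 - 2 / k.
Let eps : R := (k - 2) / (k * k).
Local Notation P := (hyperplane_proj f).

Let k_ge3 : 3 <= k. Proof. by rewrite -[3]/(3%:R) ler_nat; lia. Qed.
Let k_gt0 : 0 < k. Proof. exact: lt_le_trans k_ge3. Qed.
Let two_div_k_lt1 : 2 / k < 1.
Proof. by rewrite ltr_pdivrMr ?mul1r //; have := k_ge3; lra. Qed.

Let fE i : f i 0 = if (m <= i)%N then 1 else 0. Proof. by rewrite mxE. Qed.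

Let f_idem i : f i 0 * f i 0 = f i 0.
Proof. by rewrite fE; case: leqP; rewrite ?mulr1 ?mulr0. Qed.

Let sum_f : \sum_i f i 0 = k.
Proof.
under eq_bigr do rewrite fE.
by rewrite -big_mkcond /= -(big_geq_mkord m n xpredT (fun=> 1)) sumr_const_nat.
Qed.

Let sum_f_neq (j : 'I_n) : (m <= j)%N -> \sum_(i | i != j) f i 0 = k - 1.
Proof. by move=> mj; rewrite -sum_f [in RHS](bigD1 j) //= fE mj addrAC subrr add0r. Qed.

Let norm_sum_f_le (Q : pred 'I_n) (v : 'rV[R]_n) : (forall i, `|v 0 i| <= 1) ->
  `|\sum_(i | Q i) v 0 i * f i 0| <= \sum_(i | Q i) f i 0.
Proof.
move=> v_le1; apply: le_trans (ler_norm_sum _ _ _) (ler_sum _ _) => i _.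
by rewrite normrM fE; case: leqP; rewrite ?normr1 ?normr0 ?mulr1 ?mulr0.
Qed.

Let sup_norm_le (v : 'rV[R]_n) (a : R) : 0 <= a -> (forall i, `|v 0 i| <= a) -> N v <= a.
Proof. by move=> a_ge0 v_le; apply: l1_sup_norm_le => [|i _]; rewrite ?big_pred0. Qed.

Let normN : is_norm N := is_norm_l1_sup_norm _ _.
Let coordN (v : 'rV[R]_n) i : `|v 0 i| <= N v := l1_sup_norm_coord _ v i.

Let opnorm_ge_tail (z : 'rV[R]_n) (j : 'I_n) : z *m f = 1%:M -> (m <= j)%N ->
  1 + (k - 2) * z 0 j <= opnorm N (P z).
Proof.
move=> zf mj; pose v : 'rV[R]_n := \row_i (if i == j then 1 else - f i 0).
have Nv_le1 : N v <= 1.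
  apply: sup_norm_le => // i; rewrite mxE; case: eqP => _; rewrite ?normr1 //.
  by rewrite normrN fE; case: leqP; rewrite ?normr1 ?normr0.
have sum_vf : \sum_i v 0 i * f i 0 = 2 - k.
  rewrite (bigD1 j) //= mxE eqxx fE mj mul1r.
  under eq_bigr => i /negbTE ij do rewrite mxE ij mulNr f_idem.
  by rewrite sumrN sum_f_neq // opprB addrA.
apply: le_trans (le_opnorm normN coordN _ Nv_le1); apply: le_trans (coordN _ j).
by rewrite hyperplane_proj_coord sum_vf mxE eqxx ler_normr mulrBl opprB; apply/orP; left; lra.
Qed.

Let c_le_opnorm (z : 'rV[R]_n) : z *m f = 1%:M -> c <= opnorm N (P z).
Proof.
move=> zf; set M := opnorm N (P z).
have tail_le : \sum_i f i 0 * (1 + (k - 2) * z 0 i) <= \sum_i f i 0 * M.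
  apply: ler_sum => i _; rewrite fE; case: leqP => mi; last by rewrite !mul0r.
  by rewrite !mul1r opnorm_ge_tail.
move: tail_le; rewrite -mulr_suml sum_f.
under eq_bigr do rewrite mulrDr mulr1 mulrCA [f _ 0 * _]mulrC.
rewrite big_split /= -mulr_sumr sum_f (rV_cV_mul1 _ _).1 // => tail_le.
have kc : k * c = 2 * k - 2 by rewrite /c; field; rewrite gt_eqF.
by rewrite -(ler_pM2l k_gt0) kc; lra.
Qed.

Let opnorm_le_c (z : 'rV[R]_n) : (forall j : 'I_n, (m <= j)%N -> z 0 j = k^-1) ->
  (forall j : 'I_n, (j < m)%N -> `|z 0 j| <= eps) -> opnorm N (P z) <= c.
Proof.
move=> z_tail z_head; apply: (opnorm_le normN) => v Nv_le1; have k3 := k_ge3.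
have v_le1 i : `|v 0 i| <= 1 by apply: le_trans (coordN v i) Nv_le1.
apply: sup_norm_le => [|j]; first by have := two_div_k_lt1; rewrite /c; lra.
rewrite hyperplane_proj_coord; case: (leqP m j) => [mj|jm].
  rewrite (bigD1 j) //= fE mj mulr1 z_tail //.
  have := norm_sum_f_le (predC1 j) v_le1; rewrite sum_f_neq //=.
  set s := \sum_(i | i != j) _ => s_le.
  move: s_le (v_le1 j); rewrite !ler_norml => /andP[? ?] /andP[? ?].
  have kk : k * k^-1 = 1 by rewrite divff ?gt_eqF.
  have kinv_gt0 : 0 < k^-1 by rewrite invr_gt0.
  rewrite /c; apply/andP; split; nra.
have := norm_sum_f_le xpredT v_le1; rewrite sum_f => s_le.
have keps : k * eps = c - 1 by rewrite /c /eps; field; rewrite gt_eqF.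
rewrite (le_trans (ler_normB _ _)) // normrM.
have := z_head j jm; have := v_le1 j; have := normr_ge0 (z 0 j).
have := normr_ge0 (\sum_i v 0 i * f i 0); nra.
Qed.

Let z0f : z0 *m f = 1%:M.
Proof.
apply/rV_cV_mul1; under eq_bigr do rewrite mxE mulrAC f_idem.
by rewrite -mulr_suml sum_f divff ?gt_eqF.
Qed.

Let eps_gt0 : 0 < eps.
Proof. by have := k_ge3; rewrite /eps => ?; rewrite divr_gt0 ?mulr_gt0 //; lra. Qed.

Let z0_head (j : 'I_n) : (j < m)%N -> z0 0 j = 0.
Proof. by move=> jm; rewrite mxE fE leqNgt jm mul0r. Qed.

Let z0_tail (j : 'I_n) : (m <= j)%N -> z0 0 j = k^-1.
Proof. by move=> mj; rewrite mxE fE mj mul1r. Qed.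

Let opnorm_z0 : opnorm N (P z0) = c.
Proof.
apply/le_anti; rewrite c_le_opnorm // opnorm_le_c // => j jm.
by rewrite z0_head // normr0 ltW.
Qed.

Let min_tail (z : 'rV[R]_n) : z *m f = 1%:M -> opnorm N (P z) <= opnorm N (P z0) ->
  forall j : 'I_n, (m <= j)%N -> z 0 j = z0 0 j.
Proof.
rewrite opnorm_z0 => zf Pz_le; have k3 := k_ge3.
have z_tail_le (i : 'I_n) : (m <= i)%N -> z 0 i <= k^-1.
  move=> mi; have := le_trans (opnorm_ge_tail zf mi) Pz_le.
  have -> : c = 1 + (k - 2) * k^-1 by rewrite /c; field; rewrite gt_eqF.
  by rewrite lerD2l ler_pM2l ?subr_gt0 //; lra.
have gap_ge0 i : 0 <= f i 0 * (k^-1 - z 0 i).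
  by rewrite fE; case: leqP => mi; rewrite ?mul0r // mul1r subr_ge0 z_tail_le.
have gap_sum : \sum_i f i 0 * (k^-1 - z 0 i) = 0.
  under eq_bigr do rewrite mulrBr [f _ 0 * z _ _]mulrC.
  by rewrite sumrB -mulr_suml sum_f mulfV ?gt_eqF // (rV_cV_mul1 _ _).1 // subrr.
move=> j mj; have /eqP := @psumr_eq0P _ _ xpredT _ (fun i _ => gap_ge0 i) gap_sum j isT.
by rewrite fE mj mul1r subr_eq0 z0_tail // => /eqP.
Qed.

Lemma exists_Pmin_dim_proj_const_gt1 : exists (N : 'rV[R]_n -> R) (Y : 'M[R]_n),
  [/\ is_norm N, \rank Y = n.-1, affine_dim_eq (Pmin N Y) m & 1 < proj_const N Y].
Proof.
have f_head0 (j : 'I_n) : (j < m)%N -> f j 0 = 0 by move=> jm; rewrite fE leqNgt jm.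
have z0_min z : z *m f = 1%:M -> opnorm N (P z0) <= opnorm N (P z).
  by rewrite opnorm_z0; apply: c_le_opnorm.
have min_head (j : 'I_n) : (j < m)%N -> opnorm N (P (z0 + eps *: 'e_j)) <= opnorm N (P z0).
  move=> jm; have zj_entry i : (z0 + eps *: 'e_j) 0 i = z0 0 i + eps * (i == j)%:R.
    by rewrite !mxE eqxx.
  rewrite opnorm_z0 opnorm_le_c // => i i_m; rewrite zj_entry.
    have -> : (i == j) = false by apply/eqP => ij; move: jm; rewrite -ij ltnNge i_m.
    by rewrite z0_tail // mulr0 addr0.
  rewrite z0_head // add0r normrM gtr0_norm //.
  by case: eqP => _; rewrite ?normr1 ?normr0 ?mulr1 ?mulr0 // ltW.
have m_le_n : (m <= n)%N by lia.
exists N, (kermx f); split.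
- exact: normN.
- exact: rank_kermx_col z0f.
- exact: affine_dim_Pmin z0f m_le_n eps_gt0 f_head0 z0_min min_tail min_head.
by rewrite (proj_const_kermx z0f z0_min) opnorm_z0 /c; have := two_div_k_lt1; lra.
Qed.

End SupNormExample.

Section L1HeadExample.
Variables (R : realType) (n m : nat).
Hypothesis m_lt_n : (m < n)%N.

Let p : 'I_n := Ordinal m_lt_n.
Let A : {pred 'I_n} := [pred i : 'I_n | (i <= m)%N].
Local Notation N := (@l1_sup_norm R n A).
Let f : 'cV[R]_n := delta_mx p 0.
Let z0 : 'rV[R]_n := 'e_p.
Local Notation P := (hyperplane_proj f).

Let normN : is_norm N := is_norm_l1_sup_norm _ _.
Let coordN (v : 'rV[R]_n) i : `|v 0 i| <= N v := l1_sup_norm_coord _ v i.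

Let e_entry (j i : 'I_n) : ('e_j : 'rV[R]_n) 0 i = (i == j)%:R.
Proof. by rewrite mxE eqxx. Qed.

Let p_in_A : p \in A. Proof. exact: leqnn. Qed.

Let notin_A_neq_p i : i \notin A -> i != p.
Proof. by apply: contraNneq => ->. Qed.

Let sum_f (v : 'rV[R]_n) : \sum_i v 0 i * f i 0 = v 0 p.
Proof.
rewrite (bigD1 p) //= big1 => [|i ip]; first by rewrite mxE !eqxx mulr1 addr0.
by rewrite mxE (negbTE ip) mulr0.
Qed.

Let proj_coord (z : 'rV[R]_n) (v : 'rV[R]_n) i : (v *m P z) 0 i = v 0 i - v 0 p * z 0 i.
Proof. by rewrite hyperplane_proj_coord sum_f. Qed.

Let mul_f1 (z : 'rV[R]_n) : z *m f = 1%:M <-> z 0 p = 1.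
Proof. by rewrite rV_cV_mul1 sum_f. Qed.

Let opnorm_le1 (z : 'rV[R]_n) : z 0 p = 1 -> (forall i, i \notin A -> z 0 i = 0) ->
  \sum_(i in A | i != p) `|z 0 i| <= 1 -> opnorm N (P z) <= 1.
Proof.
move=> zp z_out z_in; apply: (opnorm_le normN) => v Nv_le1; apply: le_trans Nv_le1.
apply: l1_sup_norm_le => [|i iA]; last by rewrite proj_coord z_out // mulr0 subr0 coordN.
rewrite (bigD1 p) //= proj_coord zp mulr1 subrr normr0 add0r.
apply: le_trans (_ : \sum_(i in A | i != p) (`|v 0 i| + `|v 0 p| * `|z 0 i|) <= _).
  by apply: ler_sum => i _; rewrite proj_coord -normrM ler_normB.
have sumA_le : \sum_(i in A) `|v 0 i| <= N v by rewrite le_max lexx.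
rewrite (bigD1 p) //= in sumA_le; rewrite big_split /= -mulr_sumr.
have : `|v 0 p| * \sum_(i in A | i != p) `|z 0 i| <= `|v 0 p| by rewrite ler_piMr.
lra.
Qed.

Let opnorm_z0_le1 : opnorm N (P z0) <= 1.
Proof.
apply: opnorm_le1 => [|i /notin_A_neq_p ip|]; rewrite ?e_entry ?eqxx ?(negbTE ip) //.
by rewrite big1 // => i /andP[_ ip]; rewrite e_entry (negbTE ip) normr0.
Qed.

Let opnorm_ge1 (z : 'rV[R]_n) (j : 'I_n) : j != p -> 1 <= opnorm N (P z).
Proof.
move=> jp; apply: (opnorm_fixed_ge1 normN coordN (v := 'e_j)).
  by apply/eqP => /rowP/(_ j)/eqP; rewrite e_entry eqxx mxE oner_eq0.
by apply/rowP => i; rewrite proj_coord !e_entry (eq_sym p j) (negbTE jp) mul0r subr0.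
Qed.

Let min_tail (z : 'rV[R]_n) : z *m f = 1%:M -> opnorm N (P z) <= opnorm N (P z0) ->
  forall j : 'I_n, (m <= j)%N -> z 0 j = z0 0 j.
Proof.
move=> /mul_f1 zp /le_trans/(_ opnorm_z0_le1) Pz_le1 j mj.
have [->|jp] := eqVneq j p; first by rewrite zp e_entry eqxx.
have jA : j \notin A.
  by move: jp; rewrite inE -ltnNge -val_eqE /= ltn_neqAle mj andbT eq_sym.
have test s : `|s| = 1 -> `|1 - s * z 0 j| <= 1.
  move=> s1; pose v : 'rV[R]_n := 'e_j + s *: 'e_p.
  have v_entry i : v 0 i = (i == j)%:R + s * (i == p)%:R by rewrite !mxE !eqxx.
  have Nv_le1 : N v <= 1.
    apply: l1_sup_norm_le => [|i iA].
      rewrite (bigD1 p) //= big1 => [|i /andP[iA ip]].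
        by rewrite v_entry eqxx (eq_sym p j) (negbTE jp) add0r mulr1 s1 addr0.
      have ij : (i == j) = false by apply: contraTF iA => /eqP->.
      by rewrite v_entry (negbTE ip) ij mulr0 addr0 normr0.
    rewrite v_entry (negbTE (notin_A_neq_p iA)) mulr0 addr0.
    by case: eqP; rewrite ?normr1 ?normr0.
  apply: le_trans Pz_le1; apply: le_trans (le_opnorm normN coordN _ Nv_le1).
  apply: le_trans (coordN _ j); rewrite proj_coord !v_entry !eqxx (eq_sym p j) (negbTE jp).
  by rewrite mulr0 addr0 add0r mulr1.
have := test 1 (normr1 _); have := test (-1) ltac:(by rewrite normrN normr1).
rewrite mul1r mulN1r opprK !ler_norml e_entry (negbTE jp) /= mulr0n.
by move=> /andP[_ ?] /andP[_ ?]; lra.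
Qed.

Lemma exists_Pmin_dim : exists (N : 'rV[R]_n -> R) (Y : 'M[R]_n),
  [/\ is_norm N, \rank Y = n.-1 & affine_dim_eq (Pmin N Y) m].
Proof.
have z0f : z0 *m f = 1%:M by apply/mul_f1; rewrite e_entry eqxx.
have head_neq_p (j : 'I_n) : (j < m)%N -> j != p by move=> jm; rewrite -val_eqE /= ltn_eqF.
have f_head0 (j : 'I_n) : (j < m)%N -> f j 0 = 0.
  by move=> /head_neq_p jp; rewrite mxE (negbTE jp).
have z0_min z : z *m f = 1%:M -> opnorm N (P z0) <= opnorm N (P z).
  move=> zf; case: (pickP (predC1 p)) => [j /= jp | only_p].
    exact: le_trans opnorm_z0_le1 (opnorm_ge1 z jp).
  suff -> : z = z0 by [].
  apply/rowP => i; have /negbFE/eqP-> := only_p i.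
  by rewrite (mul_f1 z).1 // e_entry eqxx.
have min_head (j : 'I_n) : (j < m)%N -> opnorm N (P (z0 + 1 *: 'e_j)) <= opnorm N (P z0).
  move=> jm; have jp := head_neq_p j jm; have jA : j \in A by rewrite inE ltnW.
  have zj_entry i : (z0 + 1 *: 'e_j) 0 i = (i == p)%:R + (i == j)%:R.
    by rewrite scale1r mxE !e_entry.
  apply: le_trans (opnorm_ge1 z0 jp); apply: opnorm_le1 => [|i iA|].
  - by rewrite zj_entry eqxx (eq_sym p j) (negbTE jp) addr0.
  - rewrite zj_entry (negbTE (notin_A_neq_p iA)) (_ : i == j = false) ?addr0 //.
    by apply: contraNF iA => /eqP->.
  rewrite (bigD1 j) /= ?jA // big1 => [|i /andP[/andP[_ ip] ij]].
    by rewrite zj_entry eqxx (negbTE jp) add0r normr1 addr0.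
  by rewrite zj_entry (negbTE ip) (negbTE ij) addr0 normr0.
exists N, (kermx f); split.
- exact: normN.
- exact: rank_kermx_col z0f.
exact: affine_dim_Pmin z0f (ltnW m_lt_n) ltr01 f_head0 z0_min min_tail min_head.
Qed.

End L1HeadExample.

Unset Implicit Arguments.
Local Close Scope classical_set_scope.

Theorem mainTheorem4 (R : realType) (n m : nat) :
  (0 < n)%N -> (m <= n.-1)%N ->
  exists (N : 'rV[R]_n -> R) (Y : 'M[R]_n),
    [/\ is_norm N, \rank Y = n.-1, affine_dim_eq (Pmin N Y) m &
        ((m + 3 <= n)%N -> 1 < proj_const N Y)].
Proof.
move=> n_gt0 m_le; case: (leqP (m + 3) n) => [m3_le_n | n_lt_m3].
  have [N [Y [? ? ? ?]]] := exists_Pmin_dim_proj_const_gt1 R m3_le_n.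
  by exists N, Y.
have m_lt_n : (m < n)%N by lia.
have [N [Y [? ? ?]]] := exists_Pmin_dim R m_lt_n.
by exists N, Y; split => // m3_le_n; lia.
Qed.
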